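(* If $I$ is a 1-absorbing primary hyperideal of $R$, then $\sqrt{I}$ is a prime hyperideal of $R$.
   Context: Throughout, $R$ is a commutative multiplicative hyperring ($(R,+)$ abelian group, $\circ$ a commutative associative hyperoperation into nonempty subsets, $a\circ(b+c)\subseteq a\circ b+a\circ c$, $a\circ(-b)=(-a)\circ b=-(a\circ b)$), with identity $1$ ($a\in a\circ 1$); $x$ is a unit if $1\in x\circ y$ for some $y$. All hyperideals are $\mathbf{C}$-hyperideals (for any finite product $A=r_1\circ\cdots\circ r_n$, $A\cap I\neq\emptyset\Rightarrow A\subseteq I$). A prime hyperideal is a proper $P$ with $x\circ y\subseteq P\Rightarrow x\in P$ or $y\in P$. $\sqrt I$ is the intersection of the prime hyperideals containing $I$, equal to $\{r: r^n\subseteq I\text{ for some }n\}$. A 1-absorbing primary hyperideal is a proper hyperideal $I$ such that for all nonunit $x,y,z\in R$, $x\circ y\circ z\subseteq I$ implies $x\circ y\subseteq I$ or $z\in\sqrt I$. *)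

From mathcomp Require Import all_boot all_algebra.
Set Implicit Arguments. Unset Strict Implicit. Unset Printing Implicit Defensive.
Import GRing.Theory.
Local Open Scope ring_scope.

(* hmul a b z  means  z \in a o b. *)
Record mhyperring (R : zmodType) := MHyperring {
  hmul : R -> R -> R -> Prop;
  hone : R;
  hmul_nonempty : forall a b, exists z, hmul a b z;
  hmul_comm : forall a b z, hmul a b z <-> hmul b a z;
  (* (a o b) o c = a o (b o c) as sets *)
  hmul_assoc : forall a b c z,
    (exists u, hmul a b u /\ hmul u c z) <-> (exists v, hmul b c v /\ hmul a v z);
  (* a o (b + c) is included in a o b + a o c *)
  hmul_distr : forall a b c z, hmul a (b + c) z ->
    exists u v, [/\ hmul a b u, hmul a c v & z = u + v];
  hmul_oppr : forall a b z, hmul a (- b) z <-> hmul (- a) b z;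
  (* (-a) o b = -(a o b) *)
  hmul_oppl : forall a b z, hmul (- a) b z <-> hmul a b (- z);
  hmul_one : forall a, hmul a hone a
}.

Section Hyperideals.
Variables (R : zmodType) (H : mhyperring R).

Definition subset (A B : R -> Prop) := forall x, A x -> B x.

Definition setmul (A : R -> Prop) (b : R) : R -> Prop :=
  fun z => exists a, A a /\ hmul H a b z.

Definition hprod (r : R) (rs : seq R) : R -> Prop :=
  foldl setmul (fun z => z = r) rs.

Definition hmul2 (x y : R) : R -> Prop := hprod x [:: y].
Definition hmul3 (x y z : R) : R -> Prop := hprod x [:: y; z].

(* r^n for n >= 1: hpow r n = r^(n+1) *)
Definition hpow (r : R) (n : nat) : R -> Prop := hprod r (nseq n r).

Definition hunit (x : R) : Prop := exists y, hmul H x y (hone H).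

(* hyperideal (all hyperideals are C-hyperideals) *)
Definition hyperideal (I : R -> Prop) : Prop :=
  [/\ exists a, I a,
      (forall a b, I a -> I b -> I (a - b)),
      (forall r a, I a -> subset (hmul H r a) I)
    & (forall r rs, (exists z, hprod r rs z /\ I z) -> subset (hprod r rs) I)].

Definition proper (I : R -> Prop) : Prop := exists r, ~ I r.

Definition prime_hyperideal (P : R -> Prop) : Prop :=
  [/\ hyperideal P, proper P &
      forall x y, subset (hmul2 x y) P -> P x \/ P y].

Definition hrad (I : R -> Prop) : R -> Prop :=
  fun r => exists n, subset (hpow r n) I.

Definition one_absorbing_primary (I : R -> Prop) : Prop :=
  [/\ hyperideal I, proper I &
      forall x y z, ~ hunit x -> ~ hunit y -> ~ hunit z ->
        subset (hmul3 x y z) I -> subset (hmul2 x y) I \/ hrad I z].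

End Hyperideals.

From Pilot Require Import Defs.
From mathcomp Require Import all_boot all_algebra.
From mathcomp Require Import zify.
From Stdlib Require Import Permutation Classical.
Set Implicit Arguments. Unset Strict Implicit. Unset Printing Implicit Defensive.
Import GRing.Theory.
Local Open Scope ring_scope.

(* Associativity and commutativity of the hyperoperation make [lprod l]
   invariant under permutations of l, and an element y of [lprod l1] may be
   substituted by the factors l1 inside any product.  Combined with the
   absorption and C-properties of hyperideals, this gives the calculus
   "a product lies in I as soon as one of its elements does", from which
   1. the radical of any hyperideal is a hyperideal (a binomial-type
      expansion of (a + b)^(m+k+1) handles sums), and proper if I is;
   2. if x o y lies in the radical then x^(n+1) o y^(n+1) lies in I; unit
      factors cancel, and for nonunits x, y the 1-absorbing property applied
      to x o b o c, with b in x^(n+1) and c in y^(n+1), puts a power of x or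
      of y in I. *)

Local Notation "A \subseteq B" := (Defs.subset A B) (at level 70, no associativity).

(* Equality of two lists as multisets, checked by counting occurrences. *)
Ltac perm_by_count := apply/permP => ?;
  rewrite /= ?count_flatten ?map_nseq ?sumn_nseq;
  repeat (rewrite ?count_cat ?count_nseq /=); nia.

Lemma perm_eq_Permutation (T : eqType) (s1 s2 : seq T) :
  perm_eq s1 s2 -> Permutation s1 s2.
Proof.
elim: s1 s2 => [|x s1 IH] s2; first by rewrite perm_sym => /perm_nilP ->.
move=> pe; have xs2 : x \in s2 by rewrite -(perm_mem pe) mem_head.
move: pe; case/splitPr: xs2 => a b pe; apply: Permutation_cons_app; apply: IH.
by rewrite -(perm_cons x); apply: (seq.perm_trans pe); rewrite -cat1s perm_catCA.
Qed.

Lemma flatten_nseq_nseq (T : Type) m k (y : T) :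
  flatten (nseq m (nseq k y)) = nseq (m * k) y.
Proof. by elim: m => //= m ->; rewrite -nseqD mulSn. Qed.

Section Products.
Variables (R : zmodType) (H : mhyperring R).
Local Notation hm := (hmul H).

(* The hyperproduct of a nonempty list, associated to the left; the empty
   list has the empty product. *)
Definition lprod (l : seq R) : R -> Prop :=
  if l is r :: rs then hprod H r rs else fun _ => False.

Lemma foldl_setmul A l z :
  foldl (setmul H) A l z <-> exists a, A a /\ hprod H a l z.
Proof.
elim: l A z => [|r l IH] A z /=.
  by split=> [Az|[a [Aa ->]]]; first exists z.
rewrite IH; split=> [[w [[a [Aa haw]] hw]]|[a [Aa]]].
  by exists a; split=> //; rewrite /hprod /= IH; exists w; split=> //; exists a.
rewrite /hprod /= IH => -[w [[_ [-> h]] hw]].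
by exists w; split=> //; exists a.
Qed.

Lemma foldl_setmul_mono (A B : R -> Prop) l :
  A \subseteq B -> foldl (setmul H) A l \subseteq foldl (setmul H) B l.
Proof. by move=> AB z /foldl_setmul [a [/AB Ba h]]; apply/foldl_setmul; exists a. Qed.

Lemma hprod_cons a r l z :
  hprod H a (r :: l) z <-> exists v, hm a r v /\ hprod H v l z.
Proof.
rewrite /hprod /= foldl_setmul.
split=> [[v [[_ [-> h]] hv]]|[v [h hv]]]; exists v => //.
by split=> //; exists a.
Qed.

Lemma hprod_nonempty a l : exists z, hprod H a l z.
Proof.
elim: l a => [|r l IH] a; first by exists a.
have [v hv] := hmul_nonempty H a r; have [z hz] := IH v.
by exists z; apply/hprod_cons; exists v.
Qed.

(* Associativity and commutativity of the hyperoperation make the product of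
   a list invariant under permutation. *)
Lemma hprod_Permutation_tail l l' : Permutation l l' ->
  forall a, hprod H a l \subseteq hprod H a l'.
Proof.
elim=> {l l'} [|x l l' _ IH|x y l|l l' l'' _ IH1 _ IH2] a z //.
- by rewrite !hprod_cons => -[v [h /IH hv]]; exists v.
- rewrite !hprod_cons => -[v [hav]]; rewrite hprod_cons => -[w [hvx hw]].
  have [u [hyx hau]] : exists u, hm y x u /\ hm a u w.
    by apply/(hmul_assoc H); exists v.
  have [t [hax htw]] : exists t, hm a x t /\ hm t y w.
    by apply/(hmul_assoc H); exists u; split=> //; apply/(hmul_comm H).
  by exists t; split=> //; apply/hprod_cons; exists w.
- by move=> /IH1 /IH2.
Qed.

Lemma lprod_Permutation l l' : Permutation l l' -> lprod l \subseteq lprod l'.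
Proof.
elim=> {l l'} [|x l l' pl _|x y l|l l' l'' _ IH1 _ IH2] z //=.
- exact: hprod_Permutation_tail.
- by rewrite !hprod_cons => -[v [h hv]]; exists v; split=> //; apply/(hmul_comm H).
- by move=> /IH1 /IH2.
Qed.

Lemma lprod_perm l l' : perm_eq l l' -> lprod l \subseteq lprod l'.
Proof. by move/perm_eq_Permutation; apply: lprod_Permutation. Qed.

Lemma lprod_subst y l1 l0 l2 :
  lprod l1 y -> lprod (l0 ++ y :: l2) \subseteq lprod (l0 ++ l1 ++ l2).
Proof.
case: l1 => // r rs hy z hz.
have hyz : lprod (y :: l0 ++ l2) z.
  by apply: lprod_perm hz; rewrite -cat1s perm_catCA.
have : lprod ((r :: rs) ++ l0 ++ l2) z.
  by rewrite /= /hprod foldl_cat; apply: foldl_setmul_mono hyz => w ->.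
by apply: lprod_perm; rewrite perm_catCA.
Qed.

Lemma lprod_pow l y n :
  lprod l y -> hpow H y n \subseteq lprod (flatten (nseq n.+1 l)).
Proof.
move=> hy; suff gen k l2 :
    lprod (nseq k y ++ l2) \subseteq lprod (flatten (nseq k l) ++ l2).
  by move=> z; have := gen n.+1 [::] z; rewrite !cats0.
elim: k l2 => [|k IH] l2 z //=.
move=> /(lprod_subst (l0 := [::]) (l2 := nseq k y ++ l2) hy) hz.
have /IH hF : lprod (nseq k y ++ l2 ++ l) z.
  by apply: lprod_perm hz; rewrite /= perm_catC -catA.
by apply: lprod_perm hF; rewrite catA perm_catC catA.
Qed.

Lemma lprod_one l : lprod l \subseteq lprod (hone H :: l).
Proof.
case: l => // r rs z hz; apply/hprod_cons; exists r; split=> //.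
exact/(hmul_comm H)/(hmul_one H).
Qed.

Lemma hprod_opp a l z : hprod H (- a) l z -> hprod H a l (- z).
Proof.
elim: l a z => [|r l IH] a z; first by move=> /= ->; rewrite opprK.
rewrite !hprod_cons => -[v [h hv]]; exists (- v); split.
  exact/(hmul_oppl H).
by apply: IH; rewrite opprK.
Qed.

Lemma hpow_opp a n z : hpow H (- a) n z -> hpow H a n z \/ hpow H a n (- z).
Proof.
suff gen x k w : hprod H x (nseq k (- a)) w ->
    hprod H x (nseq k a) w \/ hprod H x (nseq k a) (- w).
  by rewrite /hpow => /gen [] /hprod_opp; [right | rewrite opprK; left].
elim: k x w => [|k IH] x w /=; first by left.
rewrite hprod_cons => -[v [h /IH hv]].
have hxa : hm x a (- v) by apply/(hmul_oppl H)/(hmul_oppr H).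
case: hv => hv; [right | left]; apply/hprod_cons; exists (- v); split=> //.
  by apply: hprod_opp; rewrite opprK.
by rewrite -[w]opprK; apply: hprod_opp; rewrite opprK.
Qed.

Lemma lprod_add s t l z : lprod ((s + t) :: l) z ->
  exists z1 z2, [/\ lprod (s :: l) z1, lprod (t :: l) z2 & z = z1 + z2].
Proof.
rewrite /=; elim: l s t z => [|r l IH] s t z; first by move=> /= ->; exists s, t.
rewrite hprod_cons => -[v [/(hmul_comm H) /hmul_distr [v1 [v2 [h1 h2 ->]]]]].
move=> /IH [z1 [z2 [hz1 hz2 ->]]]; exists z1, z2.
by split=> //; apply/hprod_cons; [exists v1 | exists v2]; split=> //; apply/(hmul_comm H).
Qed.

Lemma hunit_factor l b x : lprod l b -> hunit H b -> x \in l -> hunit H x.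
Proof.
move=> hb [v hv] xl; move: hb; case/splitPr: xl => l1 l2 hb.
have hbv : lprod [:: b; v] (hone H) by apply/hprod_cons; exists (hone H).
have : lprod ((v :: l1 ++ l2) ++ [:: x]) (hone H).
  apply: lprod_perm (lprod_subst (l0 := [::]) (l2 := [:: v]) hb hbv).
  by perm_by_count.
rewrite /= /hprod foldl_cat /= => -[u [_ hux]]; exists u; exact/(hmul_comm H).
Qed.

Lemma hpow_one n : hpow H (hone H) n (hone H).
Proof.
rewrite /hpow; elim: n => //= n IH.
by apply/hprod_cons; exists (hone H); split=> //; apply: hmul_one.
Qed.

Lemma lprod_perm_ideal (I : R -> Prop) l l' :
  perm_eq l l' -> lprod l \subseteq I -> lprod l' \subseteq I.
Proof. by rewrite perm_sym => /lprod_perm pl lI z /pl /lI. Qed.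

Section Hyperideal.
Variable I : R -> Prop.
Hypothesis hI : hyperideal H I.

Lemma ideal0 : I 0.
Proof. by case: hI => [[a Ia] Isub _ _]; rewrite -(subrr a); apply: Isub. Qed.

Lemma idealN x : I x -> I (- x).
Proof. by case: hI => [_ Isub _ _] Ix; rewrite -sub0r; apply: Isub => //; apply: ideal0. Qed.

Lemma idealD x y : I x -> I y -> I (x + y).
Proof. by case: hI => [_ Isub _ _] Ix /idealN Iy; rewrite -[y]opprK; apply: Isub. Qed.

Lemma lprod_absorb r rs l2 :
  lprod (r :: rs) \subseteq I -> lprod ((r :: rs) ++ l2) \subseteq I.
Proof.
case: hI => [_ _ Iabs _]; rewrite /= /hprod foldl_cat.
elim: l2 (foldl _ _ rs) => [|x l2 IH] A // AI; apply: IH => z [a [/AI Ia h]].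
by apply: (Iabs x a) => //; apply/(hmul_comm H).
Qed.

Lemma lprod_C l : (exists z, lprod l z /\ I z) -> lprod l \subseteq I.
Proof. by case: hI l => [_ _ _ IC] [[z [[]]]|r rs]; apply: IC. Qed.

Lemma lprod_C_transfer (A : R -> Prop) l :
  (exists z, A z) -> A \subseteq lprod l -> A \subseteq I -> lprod l \subseteq I.
Proof. by move=> [z Az] Al AI; apply: lprod_C; exists z; split; [exact: Al | exact: AI]. Qed.

Lemma lprod_pow_ideal l y n : lprod l y ->
  hpow H y n \subseteq I -> lprod (flatten (nseq n.+1 l)) \subseteq I.
Proof.
by move=> hy; apply: lprod_C_transfer; [exact: hprod_nonempty | exact: lprod_pow].
Qed.

Lemma hpow_ideal l y n : lprod l y ->
  lprod (flatten (nseq n.+1 l)) \subseteq I -> hpow H y n \subseteq I.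
Proof. by move=> hy lI z /(lprod_pow hy) /lI. Qed.

Lemma unit_cancel x l : hunit H x -> lprod (x :: l) \subseteq I -> lprod l \subseteq I.
Proof.
move=> [u hu] /(lprod_absorb (l2 := [:: u])) xluI z /lprod_one hz.
have hxu : lprod [:: x; u] (hone H) by apply/hprod_cons; exists (hone H).
by apply: (lprod_perm_ideal _ xluI) (lprod_subst (l0 := [::]) hxu hz); perm_by_count.
Qed.

Lemma unit_cancel_pow x j l :
  hunit H x -> lprod (nseq j x ++ l) \subseteq I -> lprod l \subseteq I.
Proof. by move=> ux; elim: j => // j IH /(unit_cancel ux). Qed.

(* Binomial-type bound: a product of p copies of a, q copies of b and j
   copies of a + b lies in I as soon as p + q + j is at least m + k + 1, where
   a^(m+1) and b^(k+1) lie in I. *)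
Lemma mixed_powers_ideal a b m k :
  hpow H a m \subseteq I -> hpow H b k \subseteq I -> forall j p q,
  (m + k < p + q + j)%N -> lprod (nseq p a ++ nseq q b ++ nseq j (a + b)) \subseteq I.
Proof.
move=> aI bI; elim=> [|j IH] p q hpqj.
  rewrite cats0; case: (ltnP m p) => [ltmp|lepm].
    by rewrite -(subnKC ltmp) nseqD -catA; apply: lprod_absorb.
  have /subnKC <- : (k < q)%N by lia.
  have bpI := lprod_absorb (l2 := nseq (q - k.+1) b ++ nseq p a) bI.
  by apply: lprod_perm_ideal bpI; perm_by_count.
move=> z /(lprod_perm (l' := (a + b) :: nseq p a ++ nseq q b ++ nseq j (a + b))).
case/(_ _)/lprod_add; first by perm_by_count.
move=> z1 [z2 [hz1 hz2 ->]]; apply: idealD.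
  apply: (IH p.+1 q); first lia.
  by apply: lprod_perm hz1; perm_by_count.
apply: (IH p q.+1); first lia.
by apply: lprod_perm hz2; perm_by_count.
Qed.

Lemma rad_add a b : hrad H I a -> hrad H I b -> hrad H I (a + b).
Proof.
move=> [m aI] [k bI]; exists (m + k)%N.
move=> z; apply: (mixed_powers_ideal aI bI (j := (m + k).+1) (p := 0) (q := 0)).
by rewrite !add0n.
Qed.

Lemma rad_opp a : hrad H I a -> hrad H I (- a).
Proof. by move=> [n aI]; exists n => z /hpow_opp [/aI|/aI/idealN]; rewrite ?opprK. Qed.

Lemma rad_absorb r a : hrad H I a -> hm r a \subseteq hrad H I.
Proof.
move=> [n aI] z hz; exists n; apply: (hpow_ideal (l := [:: r; a])).
  by apply/hprod_cons; exists z.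
have arI := lprod_absorb (l2 := nseq n.+1 r) aI.
by apply: lprod_perm_ideal arI; perm_by_count.
Qed.

Lemma rad_C r rs : (exists z, hprod H r rs z /\ hrad H I z) ->
  hprod H r rs \subseteq hrad H I.
Proof.
move=> [z [hz [n zI]]] w hw; exists n.
exact: (hpow_ideal (l := r :: rs) hw (lprod_pow_ideal (l := r :: rs) hz zI)).
Qed.

Lemma rad_hyperideal : hyperideal H (hrad H I).
Proof.
split; last exact: rad_C.
- by exists 0, 0%N => z ->; apply: ideal0.
- by move=> a b ha /rad_opp hb; apply: rad_add.
- exact: rad_absorb.
Qed.

(* The radical of a proper hyperideal is proper: it misses the identity. *)
Lemma rad_proper : Defs.proper I -> Defs.proper (hrad H I).
Proof.
case: hI => [_ _ Iabs _] [r nIr]; exists (hone H) => -[n /(_ _ (hpow_one n)) I1].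
exact/nIr/(Iabs r _ I1)/hmul_one.
Qed.

Lemma rad_mul_powers x y : hmul2 H x y \subseteq hrad H I ->
  exists n, lprod (nseq n.+1 x ++ nseq n.+1 y) \subseteq I.
Proof.
have [z hz] := hprod_nonempty x [:: y]; move=> /(_ z hz) [n zI]; exists n.
apply: (lprod_perm_ideal _ (lprod_pow_ideal (l := [:: x; y]) hz zI)).
by perm_by_count.
Qed.

End Hyperideal.

Section OneAbsorbingPrimary.
Variable I : R -> Prop.
Hypothesis hI1 : one_absorbing_primary H I.

Let hI : hyperideal H I. Proof. by case: hI1. Qed.

(* Core of the argument: for nonunits x, y with x^(n+1) o y^(n+1) inside I,
   pick b in x^(n+1) and c in y^(n+1); these are nonunits and x o b o c lies
   in I, so 1-absorption gives x o b in I (whence x^(n+2) in I) or c in the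
   radical (whence a power of y in I). *)
Lemma nonunits_rad x y n : ~ hunit H x -> ~ hunit H y ->
  lprod (nseq n.+1 x ++ nseq n.+1 y) \subseteq I -> hrad H I x \/ hrad H I y.
Proof.
move=> ux uy xyI; case: hI1 => _ _ habs.
have [b hb] : exists b, lprod (nseq n.+1 x) b := hprod_nonempty x (nseq n x).
have [c hc] : exists c, lprod (nseq n.+1 y) c := hprod_nonempty y (nseq n y).
have ub : ~ hunit H b by move=> /(hunit_factor hb) /(_ (mem_head _ _)).
have uc : ~ hunit H c by move=> /(hunit_factor hc) /(_ (mem_head _ _)).
have xbcI : hmul3 H x b c \subseteq I.
  move=> w /(lprod_subst (l0 := [:: x]) (l2 := [:: c]) hb).
  move=> /(lprod_subst (l0 := x :: nseq n.+1 x) (l2 := [::]) hc).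
  have xyxI : lprod ((x :: nseq n x ++ nseq n.+1 y) ++ [:: x]) \subseteq I.
    exact: lprod_absorb.
  by move=> hw; apply: (lprod_perm_ideal _ xyxI hw); perm_by_count.
case: (habs x b c ux ub uc xbcI) => [xbI | [m cI]].
  left; exists n.+1.
  apply: (lprod_C_transfer hI (l := nseq n.+2 x) (hprod_nonempty x [:: b])) xbI.
  by move=> w /(lprod_subst (l0 := [:: x]) (l2 := [::]) hb); rewrite cats0.
right; exists (n + m * n.+1)%N.
by have := lprod_pow_ideal hI hc cI; rewrite flatten_nseq_nseq mulSn addSn.
Qed.

Lemma rad_prime_mul x y :
  hmul2 H x y \subseteq hrad H I -> hrad H I x \/ hrad H I y.
Proof.
move=> /(rad_mul_powers hI) [n xyI].
have [ux | ux] := classic (hunit H x).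
  by right; exists n; apply: (unit_cancel_pow hI ux xyI).
have [uy | uy] := classic (hunit H y).
  left; exists n; apply: (unit_cancel_pow hI uy (j := n.+1) (l := nseq n.+1 x)).
  by apply: (lprod_perm_ideal _ xyI); rewrite perm_catC.
exact: nonunits_rad ux uy xyI.
Qed.

End OneAbsorbingPrimary.
End Products.

Theorem mainTheorem5 (R : zmodType) (H : mhyperring R) (I : R -> Prop) :
  one_absorbing_primary H I -> prime_hyperideal H (hrad H I).
Proof.
move=> hI1; have [hI properI _] := hI1.
split; first exact: rad_hyperideal hI.
- exact: rad_proper hI properI.
- exact: rad_prime_mul hI1.
Qed.
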